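(* Let $p>2$, let $\mathcal G$ be a regular single-knot metric graph of length $\ell$ with $H$ half-lines, $P$ pendants, $L$ loops ($P+L\ge1$), and let $u$ be a positive core-symmetric bound-state. Then there exists $y>0$ such that: 1. for each half-line $h$, either $u_h(x)=\varphi(x+y)$ for all $x\ge0$ or $u_h(x)=\varphi(x-y)$ for all $x\ge0$; 2. letting $H^+$ ($H^-$) be the number of half-lines with the first (second) alternative, $\theta=\frac{H^+-H^-}{P+2L}$, and $z=\varphi(y)\in\big(0,(p/2)^{1/(p-2)}\big)$, every compact edge $\kappa$ satisfies \[ -u_\kappa''+u_\kappa=u_\kappa^{p-1}\text{ in }[0,\ell],\quad u_\kappa(0)=z,\quad u_\kappa'(0)=\theta\sqrt{2f(z)},\quad u_\kappa'(\ell)=0, \] and in particular $-\frac12(u_\kappa')^2+f(u_\kappa)\equiv(1-\theta^2)f(z)$ on $[0,\ell]$.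
   Context: A single-knot metric graph consists of $H\ge1$ half-lines, $P\ge0$ pendants and $L\ge0$ loops attached at a common vertex $\mathbf 0$; regular of length $\ell$: pendants of length $\ell$, loops of length $2\ell$. Convention: a dummy vertex at the midpoint of each loop, so all compact edges have length $\ell$, identified with $[0,\ell]$ with $\mathbf 0$ at $x=0$; half-lines identified with $[0,\infty)$, $\mathbf 0$ at $x=0$. A bound-state is a nontrivial $u\in H^1(\mathcal G)$ solving $-u''+u=|u|^{p-2}u$ on each edge with Neumann–Kirchhoff conditions (sum of inward derivatives at each vertex vanishes). Core-symmetric: restrictions to all compact edges coincide. $f(x)=\frac12x^2-\frac1p|x|^p$, and $\varphi(x)=(p/2)^{1/(p-2)}\operatorname{sech}^{2/(p-2)}\big(\frac{p-2}{2}x\big)$. *)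

From Stdlib Require Import Reals Lra List.
From Coquelicot Require Import Coquelicot.
Import ListNotations.
Open Scope R_scope.

Definition rpow (x a : R) : R := if Rle_dec x 0 then 0 else Rpower x a.

Definition nl (p x : R) : R := rpow (Rabs x) (p - 2) * x.

Definition fF (p x : R) : R := x ^ 2 / 2 - rpow (Rabs x) p / p.

Definition phi (p x : R) : R :=
  Rpower (p / 2) (1 / (p - 2)) * Rpower (/ cosh ((p - 2) / 2 * x)) (2 / (p - 2)).

(* Edges of a single-knot graph: half-lines, pendants, and the two halves of
   each loop (dummy vertex at the loop midpoint). Every edge is parametrised
   with the knot 0 at x = 0; compact edges are [0, ell]. *)
Inductive edge : Type :=
| Half (i : nat)
| Pend (i : nat)
| LoopE (j : nat) (b : bool).

Definition edge_valid (H P L : nat) (e : edge) : Prop :=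
  match e with
  | Half i => (i < H)%nat
  | Pend i => (i < P)%nat
  | LoopE j _ => (j < L)%nat
  end.

Definition is_compact (e : edge) : Prop :=
  match e with Half _ => False | _ => True end.

Definition edge_dom (ell : R) (e : edge) (x : R) : Prop :=
  match e with
  | Half _ => 0 <= x
  | _ => 0 <= x <= ell
  end.

Definition rsum (n : nat) (f : nat -> R) : R := fold_right Rplus 0 (map f (seq 0 n)).

Definition solves_ode (p : R) (v : R -> R) (x : R) : Prop :=
  ex_derive v x /\ ex_derive (Derive v) x /\
  - Derive (Derive v) x + v x = nl p (v x).

Definition is_bound_state (p ell : R) (H P L : nat) (u : edge -> R -> R) : Prop :=
  (forall e x, edge_valid H P L e -> edge_dom ell e x -> solves_ode p (u e) x) /\
  (forall i, (i < H)%nat ->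
     ex_RInt_gen (fun x => (u (Half i) x) ^ 2) (at_point 0) (Rbar_locally p_infty) /\
     ex_RInt_gen (fun x => (Derive (u (Half i)) x) ^ 2) (at_point 0) (Rbar_locally p_infty)) /\
  (forall e1 e2, edge_valid H P L e1 -> edge_valid H P L e2 -> u e1 0 = u e2 0) /\
  (rsum H (fun i => Derive (u (Half i)) 0) + rsum P (fun i => Derive (u (Pend i)) 0)
   + rsum L (fun j => Derive (u (LoopE j false)) 0 + Derive (u (LoopE j true)) 0) = 0) /\
  (forall i, (i < P)%nat -> Derive (u (Pend i)) ell = 0) /\
  (* continuity and Kirchhoff at loop midpoints *)
  (forall j, (j < L)%nat ->
     u (LoopE j false) ell = u (LoopE j true) ell /\
     Derive (u (LoopE j false)) ell + Derive (u (LoopE j true)) ell = 0) /\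
  (exists e x, edge_valid H P L e /\ edge_dom ell e x /\ u e x <> 0).

Definition is_positive (ell : R) (H P L : nat) (u : edge -> R -> R) : Prop :=
  forall e x, edge_valid H P L e -> edge_dom ell e x -> 0 < u e x.

Definition core_symmetric (ell : R) (H P L : nat) (u : edge -> R -> R) : Prop :=
  forall e1 e2, edge_valid H P L e1 -> edge_valid H P L e2 ->
    is_compact e1 -> is_compact e2 ->
    forall x, 0 <= x <= ell -> u e1 x = u e2 x.

(* Along a positive solution of -v'' + v = v^(p-1) the energy -v'^2/2 + f(v) is
   constant.  On a half-line u and u' are square integrable, which forces the energy
   to vanish.  Hence the knot value z satisfies f(z) >= 0, so z = phi(y) for some
   y >= 0; every half-line has slope +-sqrt(2 f(z)) at the knot and, by uniqueness
   for the Cauchy problem, equals phi(. + y) or phi(. - y).  By core symmetry all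
   compact edges share their slope at the knot, which Kirchhoff's condition
   identifies as theta sqrt(2 f(z)), and they have slope 0 at x = ell.  Finally
   y = 0 is impossible: all slopes would vanish at the knot, so a compact edge would
   coincide with phi on [0, ell], while phi'(ell) < 0. *)

From Stdlib Require Import Reals Lra Lia List.
From Coquelicot Require Import Coquelicot.
Open Scope R_scope.

(** * Real analysis *)

Lemma is_derive_continuity_pt (g : R -> R) x l : is_derive g x l -> continuity_pt g x.
Proof.
  intros Hg. apply continuity_pt_filterlim. apply (ex_derive_continuous g). now exists l.
Qed.

Lemma MVT_interval (g g' : R -> R) a b : a <= b ->
  (forall x, a <= x <= b -> is_derive g x (g' x)) ->
  exists c, a <= c <= b /\ g b - g a = g' c * (b - a).
Proof.
  intros Hab Hg.
  destruct (MVT_gen g a b g') as [c Hc]; rewrite ?Rmin_left, ?Rmax_right in *; try lra.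
  - intros x Hx. apply Hg. lra.
  - intros x Hx. apply (is_derive_continuity_pt g x (g' x)), Hg. lra.
  - now exists c.
Qed.

Lemma const_of_is_derive_0 (g : R -> R) a b :
  (forall x, a <= x <= b -> is_derive g x 0) -> forall x, a <= x <= b -> g x = g a.
Proof.
  intros Hg x Hx.
  destruct (MVT_interval g (fun _ => 0) a x) as [c [_ Hc]]; [lra| |lra].
  intros t Ht. apply Hg. lra.
Qed.

Lemma gronwall_zero (Q dQ : R -> R) C b :
  (forall t, 0 <= t <= b -> is_derive Q t (dQ t) /\ dQ t <= C * Q t) ->
  (forall t, 0 <= t <= b -> 0 <= Q t) -> Q 0 = 0 ->
  forall t, 0 <= t <= b -> Q t = 0.
Proof.
  intros HQ Hpos H0 t Ht.
  set (g := fun s => Q s * exp (- C * s)).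
  destruct (MVT_interval g (fun s => exp (- C * s) * (dQ s - C * Q s)) 0 t)
    as [c [Hc Hgc]]; [lra| |].
  - intros s Hs. destruct (HQ s ltac:(lra)) as [Hd _]. unfold g.
    auto_derive.
    + now exists (dQ s).
    + change (Derive (fun x => Q x)) with (Derive Q).
      rewrite (is_derive_unique Q s (dQ s) Hd). ring.
  - assert (exp (- C * c) * (dQ c - C * Q c) <= 0).
    { destruct (HQ c ltac:(lra)) as [_ Hle].
      pose proof (exp_pos (- C * c)). nra. }
    unfold g in Hgc. rewrite H0, Rmult_0_l in Hgc.
    pose proof (exp_pos (- C * t)). pose proof (Hpos t Ht). nra.
Qed.

Lemma Derive_ext_interval (f g : R -> R) a b x : a < b -> a <= x <= b ->
  ex_derive f x -> ex_derive g x -> (forall t, a <= t <= b -> f t = g t) ->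
  Derive f x = Derive g x.
Proof.
  intros Hab Hx [lf Hf] [lg Hg] Hfg.
  rewrite (is_derive_unique _ _ _ Hf), (is_derive_unique _ _ _ Hg).
  pose proof (proj1 (is_derive_Reals _ _ _) (is_derive_minus _ _ _ _ _ Hf Hg)) as Hd.
  unfold minus, plus, opp in Hd; simpl in Hd.
  destruct (Req_dec (lf - lg) 0) as [E|E]; [lra|].
  destruct (Hd (Rabs (lf - lg)) ltac:(now apply Rabs_pos_lt)) as [[del Hdel] Hlim].
  assert (Hh : exists h, h <> 0 /\ Rabs h < del /\ a <= x + h <= b).
  { destruct (Rlt_dec x b).
    - exists (Rmin del (b - x) / 2). pose proof (Rmin_l del (b - x)).
      pose proof (Rmin_r del (b - x)). pose proof (Rmin_glb_lt del (b - x) 0 Hdel ltac:(lra)).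
      rewrite Rabs_pos_eq; lra.
    - exists (- (Rmin del (x - a) / 2)). pose proof (Rmin_l del (x - a)).
      pose proof (Rmin_r del (x - a)). pose proof (Rmin_glb_lt del (x - a) 0 Hdel ltac:(lra)).
      rewrite Rabs_Ropp, Rabs_pos_eq; lra. }
  destruct Hh as [h [Hh0 [Hhd Hhx]]].
  (* the difference quotient of [f - g] with step [h] vanishes *)
  specialize (Hlim h Hh0 Hhd). simpl in Hlim.
  rewrite !Hfg in Hlim by lra.
  replace ((g (x + h) + - g (x + h) - (g x + - g x)) / h - (lf + - lg)) with (- (lf - lg))
    in Hlim by (field; lra).
  rewrite Rabs_Ropp in Hlim. lra.
Qed.

Lemma not_ex_RInt_gen_ge (g : R -> R) eps : 0 < eps ->
  (forall x, 0 <= x -> eps <= g x) ->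
  ~ ex_RInt_gen g (at_point 0) (Rbar_locally p_infty).
Proof.
  intros Heps Hg [l Hl].
  destruct (Hl (ball l 1) (locally_ball l (mkposreal 1 Rlt_0_1)))
    as [Q S HQ [M HM] HQS].
  set (b := Rmax (M + 1) ((Rabs l + 1) / eps)).
  assert (HbM : M < b) by (unfold b; pose proof (Rmax_l (M + 1) ((Rabs l + 1) / eps)); lra).
  assert (Hbl : (Rabs l + 1) / eps <= b) by apply Rmax_r.
  assert (Hb0 : 0 < b).
  { pose proof (Rabs_pos l). pose proof (Rdiv_lt_0_compat (Rabs l + 1) eps ltac:(lra) Heps). lra. }
  destruct (HQS 0 b HQ (HM b HbM)) as [I [HI HIl]]. simpl in HI.
  assert (Hbeps : eps * b <= I).
  { assert (HIc := is_RInt_const 0 b eps).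
    replace (eps * b) with (scal (b - 0) eps) by (unfold scal; simpl; unfold mult; simpl; ring).
    apply (is_RInt_le _ _ 0 b _ _ ltac:(lra) HIc HI). intros x Hx. apply Hg. lra. }
  change (Rabs (I - l) < 1) in HIl. apply Rabs_def2 in HIl.
  apply (Rmult_le_compat_l eps) in Hbl; [|lra].
  replace (eps * ((Rabs l + 1) / eps)) with (Rabs l + 1) in Hbl by (field; lra).
  pose proof (Rle_abs l). lra.
Qed.

Lemma Derive_shift (v : R -> R) c x : Derive (fun t => v (t + c)) x = Derive v (x + c).
Proof.
  unfold Derive. f_equal. apply Lim_ext. intros h. do 3 f_equal. ring.
Qed.

Lemma is_derive_shift (v : R -> R) c x l :
  is_derive v (x + c) l -> is_derive (fun t => v (t + c)) x l.
Proof.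
  intros Hv. replace l with (scal 1 l) by (unfold scal; simpl; unfold mult; simpl; ring).
  apply (is_derive_comp v (fun t => t + c)); [easy|].
  auto_derive; [easy|ring].
Qed.

Lemma solves_ode_shift p v c x : solves_ode p v (x + c) -> solves_ode p (fun t => v (t + c)) x.
Proof.
  intros [[l Hd] [[l' Hdd] Hode]]. split; [|split].
  - exists l. now apply is_derive_shift.
  - exists l'. apply (is_derive_ext (fun t => Derive v (t + c))).
    + intros t. symmetry. apply Derive_shift.
    + now apply is_derive_shift.
  - rewrite (Derive_ext _ (fun t => Derive v (t + c))) by (intros; apply Derive_shift).
    now rewrite Derive_shift.
Qed.

Lemma Rpower_pos x a : 0 < Rpower x a.
Proof. apply exp_pos. Qed.

Lemma Rpower_1_l a : Rpower 1 a = 1.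
Proof. unfold Rpower. now rewrite ln_1, Rmult_0_r, exp_0. Qed.

Lemma gronwall_rate a a' N C : 0 <= C -> Rabs N <= C * Rabs a ->
  2 * a * a' + 2 * a' * (a - N) <= (2 + C) * (a ^ 2 + a' ^ 2).
Proof.
  intros HC HN.
  assert (Ha'N : - (a' * N) <= Rabs a' * (C * Rabs a)).
  { apply (Rle_trans _ (Rabs (a' * N))).
    - rewrite <- Rabs_Ropp. apply Rle_abs.
    - rewrite Rabs_mult. apply Rmult_le_compat_l; [apply Rabs_pos|easy]. }
  assert (2 * Rabs a' * Rabs a <= a ^ 2 + a' ^ 2).
  { rewrite <- (pow2_abs a), <- (pow2_abs a'). pose proof (pow2_ge_0 (Rabs a' - Rabs a)). nra. }
  pose proof (Rabs_pos a). pose proof (Rabs_pos a'). pose proof (pow2_ge_0 (a - a')). nra.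
Qed.

Lemma fold_right_Rplus_ext (f g : nat -> R) l : (forall i, In i l -> f i = g i) ->
  fold_right Rplus 0 (map f l) = fold_right Rplus 0 (map g l).
Proof. induction l; simpl; intros Hfg; auto. rewrite Hfg, IHl; auto. Qed.

Lemma rsum_ext n f g : (forall i, (i < n)%nat -> f i = g i) -> rsum n f = rsum n g.
Proof.
  intros Hfg. apply fold_right_Rplus_ext. intros i Hi. apply in_seq in Hi. apply Hfg. lia.
Qed.

Lemma fold_right_Rplus_sign (s : nat -> bool) a b l :
  fold_right Rplus 0 (map (fun i => if s i then a else b) l) =
  INR (length (filter s l)) * a + (INR (length l) - INR (length (filter s l))) * b.
Proof.
  induction l as [|i l IH]; cbn [map fold_right filter length]; [simpl; ring|].
  rewrite IH. destruct (s i); cbn [length]; rewrite ?S_INR; ring.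
Qed.

Lemma rsum_sign (s : nat -> bool) a b n :
  rsum n (fun i => if s i then a else b) =
  INR (length (filter s (seq 0 n))) * a + (INR n - INR (length (filter s (seq 0 n)))) * b.
Proof. unfold rsum. now rewrite fold_right_Rplus_sign, length_seq. Qed.

Lemma rsum_const n c : rsum n (fun _ => c) = INR n * c.
Proof.
  change (rsum n (fun i => if (fun _ => true) i then c else c) = INR n * c).
  rewrite rsum_sign, List.filter_true, length_seq. ring.
Qed.

Lemma cosh_pos x : 0 < cosh x.
Proof. unfold cosh. pose proof (exp_pos x). pose proof (exp_pos (- x)). lra. Qed.

Lemma cosh_sq x : cosh x ^ 2 = 1 + sinh x ^ 2.
Proof.
  unfold cosh, sinh. rewrite exp_Ropp. pose proof (exp_pos x). field. lra.
Qed.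

Lemma cosh_gt_1 x : x <> 0 -> 1 < cosh x.
Proof.
  intros Hx. assert (sinh x <> 0).
  { rewrite <- sinh_0. destruct (Rlt_dec x 0) as [Hlt|Hge].
    - apply Rlt_not_eq, sinh_lt, Hlt.
    - apply not_eq_sym, Rlt_not_eq, sinh_lt. lra. }
  pose proof (cosh_sq x). pose proof (cosh_pos x). pose proof (pow2_gt_0 _ H).
  apply Rnot_le_lt. intros Hle. nra.
Qed.

Lemma cosh_ge_1 x : 1 <= cosh x.
Proof.
  destruct (Req_dec x 0) as [->|Hx]; [rewrite cosh_0; lra|]. now apply Rlt_le, cosh_gt_1.
Qed.

Lemma tanh_sq x : 1 - tanh x ^ 2 = / cosh x ^ 2.
Proof.
  unfold tanh. pose proof (cosh_sq x). pose proof (cosh_pos x). field_simplify_eq; lra.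
Qed.

Lemma tanh_pos x : 0 < x -> 0 < tanh x.
Proof.
  intros Hx. unfold tanh. apply Rdiv_lt_0_compat; [|apply cosh_pos].
  rewrite <- sinh_0. now apply sinh_lt.
Qed.

Lemma tanh_opp x : tanh (- x) = - tanh x.
Proof.
  unfold tanh, sinh, cosh. rewrite Ropp_involutive. pose proof (cosh_pos x). unfold cosh in *.
  field. lra.
Qed.

Lemma is_derive_tanh x : is_derive tanh x (1 - tanh x ^ 2).
Proof.
  pose proof (cosh_pos x). unfold tanh, sinh, cosh in *. auto_derive; [lra|]. field. lra.
Qed.

(** * The nonlinearity and the energy *)

Section Nonlinearity.

Variable p : R.
Hypothesis p_gt_2 : 2 < p.

Lemma nl_pos v : 0 < v -> nl p v = Rpower v (p - 2) * v.
Proof.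
  intros Hv. unfold nl, rpow. rewrite Rabs_pos_eq by lra.
  destruct (Rle_dec v 0); [lra|easy].
Qed.

Lemma Rpower_pred v : 0 < v -> Rpower v (p - 2) * v = Rpower v (p - 1).
Proof.
  intros Hv. rewrite <- (Rpower_1 v) at 2 by easy. rewrite <- Rpower_plus. f_equal. ring.
Qed.

Lemma fF_pos v : 0 < v -> fF p v = v ^ 2 * (1 / 2 - Rpower v (p - 2) / p).
Proof.
  intros Hv. unfold fF, rpow. rewrite Rabs_pos_eq by lra.
  destruct (Rle_dec v 0); [lra|].
  replace (Rpower v p) with (Rpower v (p - 2) * Rpower v (INR 2))
    by (rewrite <- Rpower_plus; f_equal; simpl; ring).
  rewrite Rpower_pow by easy. field. lra.
Qed.

(* The positive zero of [fF p] and the maximum of [phi p]. *)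
Definition peak : R := Rpower (p / 2) (1 / (p - 2)).

Lemma peak_pos : 0 < peak.
Proof. apply Rpower_pos. Qed.

Lemma Rpower_peak : Rpower peak (p - 2) = p / 2.
Proof.
  unfold peak. rewrite Rpower_mult.
  replace (1 / (p - 2) * (p - 2)) with 1 by (field; lra). apply Rpower_1. lra.
Qed.

Lemma le_peak_of_fF_nonneg v : 0 < v -> 0 <= fF p v -> v <= peak.
Proof.
  intros Hv Hf. rewrite fF_pos in Hf by easy.
  assert (HK : Rpower v (p - 2) <= p / 2).
  { pose proof (pow_lt v 2 Hv).
    assert (Hfac : 0 <= 1 / 2 - Rpower v (p - 2) / p) by nra.
    apply (Rmult_le_compat_l p) in Hfac; [|lra]. field_simplify in Hfac; lra. }
  replace v with (Rpower (Rpower v (p - 2)) (1 / (p - 2))).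
  - apply Rle_Rpower_l; [|split; [apply Rpower_pos|easy]].
    apply Rlt_le, Rdiv_lt_0_compat; lra.
  - rewrite Rpower_mult. replace ((p - 2) * (1 / (p - 2))) with 1 by (field; lra).
    now apply Rpower_1.
Qed.

Lemma fF_small v : 0 < v <= 1 -> 0 <= fF p v <= v ^ 2 / 2.
Proof.
  intros Hv. rewrite fF_pos by lra.
  assert (HK : Rpower v (p - 2) <= 1).
  { rewrite <- (Rpower_1_l (p - 2)). apply Rle_Rpower_l; lra. }
  pose proof (Rpower_pos v (p - 2)). pose proof (pow_lt v 2 (proj1 Hv)).
  assert (0 <= Rpower v (p - 2) / p <= 1 / 2).
  { split; [apply Rdiv_le_0_compat; lra|].
    apply (Rmult_le_reg_l p); [lra|]. field_simplify; lra. }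
  split; nra.
Qed.

Lemma nl_lipschitz K a b : 0 < a <= K -> 0 < b <= K ->
  Rabs (nl p a - nl p b) <= (p - 1) * Rpower K (p - 2) * Rabs (a - b).
Proof.
  intros Ha Hb.
  assert (Hmin : 0 < Rmin a b) by (apply Rmin_glb_lt; lra).
  destruct (MVT_interval (fun t => Rpower t (p - 1)) (fun t => (p - 1) * Rpower t (p - 2))
    (Rmin a b) (Rmax a b)) as [c [Hc Hmvt]].
  { apply Rle_trans with a; [apply Rmin_l|apply Rmax_l]. }
  { intros t Ht. apply is_derive_Reals.
    replace (p - 2) with (p - 1 - 1) by ring. apply derivable_pt_lim_power. lra. }
  assert (HcK : c <= K) by (pose proof (Rmax_lub a b K); lra).
  assert (Hder : 0 <= (p - 1) * Rpower c (p - 2) <= (p - 1) * Rpower K (p - 2)).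
  { pose proof (Rpower_pos c (p - 2)).
    assert (Rpower c (p - 2) <= Rpower K (p - 2)) by (apply Rle_Rpower_l; lra).
    split; [|apply Rmult_le_compat_l]; nra. }
  rewrite !nl_pos, !Rpower_pred by lra.
  destruct (Rle_dec a b) as [Hab|Hab].
  - rewrite Rmin_left, Rmax_right in Hmvt by lra.
    rewrite <- Rabs_Ropp, Ropp_minus_distr, <- (Rabs_Ropp (a - b)), Ropp_minus_distr, Hmvt.
    rewrite Rabs_mult, !Rabs_pos_eq by lra. apply Rmult_le_compat_r; lra.
  - rewrite Rmin_right, Rmax_left in Hmvt by lra.
    rewrite Hmvt, Rabs_mult, !Rabs_pos_eq by lra. apply Rmult_le_compat_r; lra.
Qed.

Definition energy (v : R -> R) (x : R) : R := - (1 / 2) * (Derive v x) ^ 2 + fF p (v x).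

Lemma is_derive_energy v x : solves_ode p v x -> 0 < v x -> is_derive (energy v) x 0.
Proof.
  intros [Hd [Hdd Hode]] Hv.
  assert (Hloc : locally x (fun t => 0 < v t)).
  { apply (ex_derive_continuous v x Hd). apply (open_gt 0 (v x) Hv). }
  apply (is_derive_ext_loc
    (fun t => - (1 / 2) * (Derive v t) ^ 2 + (v t) ^ 2 * (1 / 2 - Rpower (v t) (p - 2) / p))).
  { revert Hloc. apply filter_imp. intros t Ht. unfold energy. now rewrite fF_pos. }
  unfold Rpower. auto_derive; [repeat split; auto|].
  change (Derive (fun t => v t)) with (Derive v).
  change (Derive (fun t => Derive v t)) with (Derive (Derive v)).
  rewrite nl_pos in Hode by easy. unfold Rpower in Hode.
  set (K := exp ((p - 2) * ln (v x))) in *.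
  replace (Derive (Derive v) x) with (v x - K * v x) by lra.
  field. lra.
Qed.

Lemma energy_const v a b :
  (forall x, a <= x <= b -> solves_ode p v x /\ 0 < v x) ->
  forall x, a <= x <= b -> energy v x = energy v a.
Proof.
  intros Hv. apply const_of_is_derive_0. intros x Hx.
  destruct (Hv x Hx). now apply is_derive_energy.
Qed.

Lemma le_peak_of_energy_nonneg v x : 0 < v x -> 0 <= energy v x -> v x <= peak.
Proof.
  intros Hv HE. apply le_peak_of_fF_nonneg; [easy|].
  unfold energy in HE. pose proof (pow2_ge_0 (Derive v x)). lra.
Qed.

(* A nonzero energy E would give v^2 + v'^2 >= min(1, |E|) everywhere. *)
Lemma energy_halfline v :
  (forall x, 0 <= x -> solves_ode p v x /\ 0 < v x) ->
  ex_RInt_gen (fun x => (v x) ^ 2) (at_point 0) (Rbar_locally p_infty) ->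
  ex_RInt_gen (fun x => (Derive v x) ^ 2) (at_point 0) (Rbar_locally p_infty) ->
  forall x, 0 <= x -> energy v x = 0.
Proof.
  intros Hv [l1 Hl1] [l2 Hl2].
  assert (Hconst : forall x, 0 <= x -> energy v x = energy v 0).
  { intros x Hx. apply (energy_const v 0 x); [|lra]. intros t Ht. apply Hv. lra. }
  assert (E0 : energy v 0 = 0).
  { destruct (Req_dec (energy v 0) 0) as [|HE]; [easy|exfalso].
    set (eps := Rmin 1 (Rabs (energy v 0))).
    assert (Heps : 0 < eps) by (apply Rmin_glb_lt; [lra|now apply Rabs_pos_lt]).
    apply (not_ex_RInt_gen_ge (fun x => (v x) ^ 2 + (Derive v x) ^ 2) eps Heps).
    - intros x Hx. destruct (Rle_dec eps ((v x) ^ 2 + (Derive v x) ^ 2)) as [|Hlt]; [easy|].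
      exfalso. apply Rnot_le_lt in Hlt.
      pose proof (Rmin_l 1 (Rabs (energy v 0))) as Heps1.
      pose proof (Rmin_r 1 (Rabs (energy v 0))) as HepsE.
      fold eps in Heps1, HepsE. destruct (Hv x Hx) as [_ Hvx].
      pose proof (pow2_ge_0 (Derive v x)).
      assert (Hv1 : v x < 1) by nra.
      assert (Hsmall : 0 <= fF p (v x) <= (v x) ^ 2 / 2) by (apply fF_small; lra).
      rewrite <- (Hconst x Hx) in HepsE. unfold energy in HepsE.
      unfold Rabs in HepsE. destruct Rcase_abs; lra.
    - exists (plus l1 l2). exact (is_RInt_gen_plus _ _ _ _ Hl1 Hl2). }
  intros x Hx. now rewrite Hconst.
Qed.

(* Gronwall for (v - w)^2 + (v' - w')^2, the nonlinearity being Lipschitz on (0, K]. *)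
Lemma ode_unique K v w b : 0 < K ->
  (forall x, 0 <= x <= b ->
     solves_ode p v x /\ solves_ode p w x /\ 0 < v x <= K /\ 0 < w x <= K) ->
  v 0 = w 0 -> Derive v 0 = Derive w 0 -> forall x, 0 <= x <= b -> v x = w x.
Proof.
  intros HK Hvw H0 H0' x Hx.
  set (C := (p - 1) * Rpower K (p - 2)).
  set (Q := fun t => (v t - w t) ^ 2 + (Derive v t - Derive w t) ^ 2).
  assert (HQ : forall t, 0 <= t <= b -> Q t = 0).
  { apply (gronwall_zero Q (fun t => 2 * (v t - w t) * (Derive v t - Derive w t)
      + 2 * (Derive v t - Derive w t) * (Derive (Derive v) t - Derive (Derive w) t)) (2 + C)).
    - intros t Ht. destruct (Hvw t Ht) as [[V1 [V2 V3]] [[W1 [W2 W3]] [Hv Hw]]]. split.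
      + unfold Q. auto_derive; [repeat split; auto|].
        change (Derive (fun t => v t)) with (Derive v).
        change (Derive (fun t => w t)) with (Derive w).
        change (Derive (fun t => Derive v t)) with (Derive (Derive v)).
        change (Derive (fun t => Derive w t)) with (Derive (Derive w)). ring.
      + replace (Derive (Derive v) t - Derive (Derive w) t)
          with ((v t - w t) - (nl p (v t) - nl p (w t))) by lra.
        apply gronwall_rate; [|now apply nl_lipschitz].
        pose proof (Rpower_pos K (p - 2)). unfold C. nra.
    - intros t _. unfold Q. pose proof (pow2_ge_0 (v t - w t)).
      pose proof (pow2_ge_0 (Derive v t - Derive w t)). lra.
    - unfold Q. rewrite H0, H0'. ring. }
  specialize (HQ x Hx). unfold Q in HQ.
  pose proof (pow2_ge_0 (v x - w x)). pose proof (pow2_ge_0 (Derive v x - Derive w x)). nra.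
Qed.

End Nonlinearity.

(** * The soliton *)

Section Soliton.

Variable p : R.
Hypothesis p_gt_2 : 2 < p.

Let k := (p - 2) / 2.

Lemma phi_sech x : phi p x = peak p * Rpower (/ cosh (k * x)) (2 / (p - 2)).
Proof. easy. Qed.

Lemma phi_pos x : 0 < phi p x.
Proof. rewrite phi_sech. apply Rmult_lt_0_compat; [apply peak_pos|apply Rpower_pos]. Qed.

Lemma phi_opp x : phi p (- x) = phi p x.
Proof.
  rewrite !phi_sech. unfold cosh. replace (k * - x) with (- (k * x)) by ring.
  now rewrite Ropp_involutive, Rplus_comm.
Qed.

Lemma Rpower_sech_le_1 x : Rpower (/ cosh (k * x)) (2 / (p - 2)) <= 1.
Proof.
  rewrite <- (Rpower_1_l (2 / (p - 2))). pose proof (cosh_ge_1 (k * x)).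
  apply Rle_Rpower_l; [apply Rlt_le, Rdiv_lt_0_compat; lra|].
  split; [apply Rinv_0_lt_compat; lra|]. rewrite <- Rinv_1. apply Rinv_le_contravar; lra.
Qed.

Lemma phi_le_peak x : phi p x <= peak p.
Proof.
  rewrite phi_sech. pose proof (peak_pos p). pose proof (Rpower_sech_le_1 x). nra.
Qed.

Lemma phi_lt_peak x : x <> 0 -> phi p x < peak p.
Proof.
  intros Hx. rewrite phi_sech. pose proof (peak_pos p).
  assert (Rpower (/ cosh (k * x)) (2 / (p - 2)) < 1).
  { rewrite <- (Rpower_1_l (2 / (p - 2))).
    assert (1 < cosh (k * x))
      by (apply cosh_gt_1; unfold k; intros E; apply Rmult_integral in E; lra).
    apply Rlt_Rpower_l; [apply Rdiv_lt_0_compat; lra|].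
    split; [apply Rinv_0_lt_compat; lra|]. rewrite <- Rinv_1. apply Rinv_lt_contravar; lra. }
  nra.
Qed.

Lemma Rpower_phi x : Rpower (phi p x) (p - 2) = p / 2 * (1 - tanh (k * x) ^ 2).
Proof.
  pose proof (cosh_pos (k * x)).
  rewrite phi_sech, <- Rpower_mult_distr, Rpower_peak, Rpower_mult, tanh_sq
    by (auto using peak_pos, Rpower_pos, Rinv_0_lt_compat).
  replace (2 / (p - 2) * (p - 2)) with (INR 2) by (simpl; field; lra).
  rewrite Rpower_pow, pow_inv by (now apply Rinv_0_lt_compat). easy.
Qed.

Lemma fF_phi x : 2 * fF p (phi p x) = (tanh (k * x) * phi p x) ^ 2.
Proof. rewrite fF_pos, Rpower_phi by (auto using phi_pos). unfold k. field. lra. Qed.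

Lemma sqrt_2fF_phi y : 0 <= y -> sqrt (2 * fF p (phi p y)) = tanh (k * y) * phi p y.
Proof.
  intros Hy. rewrite fF_phi. apply sqrt_pow2.
  pose proof (phi_pos y). destruct (Rle_lt_or_eq_dec 0 y Hy) as [Hy0|<-].
  - assert (0 < tanh (k * y)) by (apply tanh_pos, Rmult_lt_0_compat; unfold k; lra). nra.
  - rewrite Rmult_0_r. unfold tanh. rewrite sinh_0. lra.
Qed.

Lemma is_derive_phi x : is_derive (phi p) x (- tanh (k * x) * phi p x).
Proof.
  apply (is_derive_ext (fun t => peak p * exp (2 / (p - 2) * ln (/ cosh (k * t))))); [easy|].
  pose proof (cosh_pos (k * x)). rewrite phi_sech.
  unfold Rpower, tanh, sinh, cosh in *. auto_derive.
  - split; [lra|split; [apply Rinv_0_lt_compat; lra|easy]].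
  - unfold Rdiv in *. set (Z := exp (2 * / (p - 2) * _)).
    set (e1 := exp (k * x)) in *. set (e2 := exp (- (k * x))) in *.
    unfold k. field. split; lra.
Qed.

Lemma solves_ode_phi x : solves_ode p (phi p) x.
Proof.
  assert (HD : forall t, Derive (phi p) t = - tanh (k * t) * phi p t)
    by (intros t; apply is_derive_unique, is_derive_phi).
  assert (HDD : is_derive (fun t => - tanh (k * t) * phi p t) x
     (- (k * (1 - tanh (k * x) ^ 2)) * phi p x + - tanh (k * x) * (- tanh (k * x) * phi p x))).
  { apply (is_derive_mult (fun t => - tanh (k * t)) (phi p)); [|apply is_derive_phi|].
    - apply (is_derive_opp (fun t => tanh (k * t))).
      replace (k * (1 - tanh (k * x) ^ 2)) with (scal k (1 - tanh (k * x) ^ 2))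
        by (unfold scal; simpl; unfold mult; simpl; ring).
      apply (is_derive_comp tanh (fun t => k * t)); [apply is_derive_tanh|].
      auto_derive; [easy|ring].
    - intros; unfold mult; simpl; ring. }
  apply (is_derive_ext _ _ _ _ (fun t => eq_sym (HD t))) in HDD.
  split; [|split].
  - eexists. apply is_derive_phi.
  - eexists. exact HDD.
  - rewrite (is_derive_unique _ _ _ HDD), nl_pos, Rpower_phi by (auto using phi_pos).
    unfold k. field.
Qed.

Lemma phi_surj z : 0 < z <= peak p -> exists y, 0 <= y /\ phi p y = z.
Proof.
  intros Hz. pose proof (peak_pos p).
  (* phi y = z iff cosh (k y) = w; take k y = arcosh w = arcsinh (sqrt (w^2 - 1)) *)
  set (w := Rpower (peak p / z) k).
  assert (Hw : 1 <= w).
  { unfold w. rewrite <- (Rpower_1_l k). apply Rle_Rpower_l; [unfold k; lra|].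
    split; [lra|]. apply (Rmult_le_reg_r z); [lra|]. field_simplify; lra. }
  set (t := arcsinh (sqrt (w ^ 2 - 1))).
  assert (Ht : 0 <= t) by (rewrite <- arcsinh_0; apply arcsinh_le, sqrt_pos).
  assert (Hcosh : cosh t = w).
  { pose proof (cosh_sq t). pose proof (cosh_pos t). unfold t in *.
    rewrite sinh_arcsinh, pow2_sqrt in * by nra. nra. }
  exists (t / k). split; [apply Rdiv_le_0_compat; unfold k; lra|].
  rewrite phi_sech. replace (k * (t / k)) with t by (unfold k; field; lra).
  rewrite Hcosh. unfold w. rewrite <- Rpower_Ropp, Rpower_mult.
  replace (- k * (2 / (p - 2))) with (Ropp 1) by (unfold k; field; lra).
  rewrite Rpower_Ropp, Rpower_1 by (apply Rdiv_lt_0_compat; lra). field. lra.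
Qed.

Lemma eq_phi_shift v b c :
  (forall x, 0 <= x <= b -> solves_ode p v x /\ 0 < v x) -> 0 <= energy p v 0 ->
  v 0 = phi p c -> Derive v 0 = - tanh (k * c) * phi p c ->
  forall x, 0 <= x <= b -> v x = phi p (x + c).
Proof.
  intros Hv HE H0 H0'.
  apply (ode_unique p p_gt_2 (peak p) v (fun t => phi p (t + c)) b (peak_pos p)).
  - intros x Hx. destruct (Hv x Hx) as [Hs Hpos].
    split; [easy|]. split; [apply solves_ode_shift, solves_ode_phi|].
    split; [split; [easy|]|split; [apply phi_pos|apply phi_le_peak]].
    apply le_peak_of_energy_nonneg; [easy|easy|].
    rewrite (energy_const p p_gt_2 v 0 b Hv x Hx). easy.
  - now rewrite Rplus_0_l.
  - rewrite Derive_shift, Rplus_0_l, H0'. symmetry. apply is_derive_unique, is_derive_phi.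
Qed.

End Soliton.

(** * Bound states *)

Section Bound_state.

Variables (p ell : R) (H P L : nat) (u : edge -> R -> R).
Hypothesis p_gt_2 : 2 < p.
Hypothesis ell_pos : 0 < ell.
Hypothesis H_ge_1 : (1 <= H)%nat.
Hypothesis core_nonempty : (1 <= P + L)%nat.
Hypothesis u_bound_state : is_bound_state p ell H P L u.
Hypothesis u_pos : is_positive ell H P L u.
Hypothesis u_core_sym : core_symmetric ell H P L u.

Definition knot_value : R := u (Half 0) 0.

Definition knot_slope : R := sqrt (2 * fF p knot_value).

Definition core_edge : edge := match P with O => LoopE 0 false | S _ => Pend 0 end.

(* [true] on the half-lines decreasing at the knot, which turn out to be phi (. + y). *)
Definition half_sign (i : nat) : bool :=
  if Rlt_dec (Derive (u (Half i)) 0) 0 then true else false.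

Definition theta : R :=
  let Hp := length (filter half_sign (seq 0 H)) in
  (INR Hp - INR (H - Hp)) / INR (P + 2 * L).

Lemma core_edge_valid : edge_valid H P L core_edge /\ is_compact core_edge.
Proof. unfold core_edge. destruct P; simpl; split; auto; lia. Qed.

Lemma half_solution i : (i < H)%nat ->
  forall x, 0 <= x -> solves_ode p (u (Half i)) x /\ 0 < u (Half i) x.
Proof.
  intros Hi x Hx. destruct u_bound_state as [Hode _].
  split; [apply Hode|apply u_pos]; easy.
Qed.

Lemma compact_solution e : edge_valid H P L e -> is_compact e ->
  forall x, 0 <= x <= ell -> solves_ode p (u e) x /\ 0 < u e x.
Proof.
  intros He Hc x Hx. destruct u_bound_state as [Hode _].
  assert (edge_dom ell e x) by (destruct e; easy).
  split; [apply Hode|apply u_pos]; easy.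
Qed.

Lemma value_at_knot e : edge_valid H P L e -> u e 0 = knot_value.
Proof.
  intros He. destruct u_bound_state as [_ [_ [Hcont _]]].
  apply Hcont; [easy|simpl; lia].
Qed.

Lemma half_energy i x : (i < H)%nat -> 0 <= x -> energy p (u (Half i)) x = 0.
Proof.
  intros Hi. destruct u_bound_state as [_ [Hint _]]. destruct (Hint i Hi).
  apply energy_halfline; auto. now apply half_solution.
Qed.

Lemma fF_knot_nonneg : 0 <= fF p knot_value.
Proof.
  pose proof (half_energy 0 0 ltac:(lia) (Rle_refl 0)) as HE.
  unfold energy in HE. fold knot_value in HE.
  pose proof (pow2_ge_0 (Derive (u (Half 0)) 0)). lra.
Qed.

Lemma half_slope i : (i < H)%nat ->
  Derive (u (Half i)) 0 = if half_sign i then - knot_slope else knot_slope.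
Proof.
  intros Hi. pose proof (half_energy i 0 Hi (Rle_refl 0)) as HE.
  unfold energy in HE. rewrite value_at_knot in HE by easy.
  assert (Hsq : knot_slope ^ 2 = (Derive (u (Half i)) 0) ^ 2).
  { unfold knot_slope. rewrite pow2_sqrt; [lra|]. pose proof fF_knot_nonneg. lra. }
  pose proof (sqrt_pos (2 * fF p knot_value)) as Hw. fold knot_slope in Hw.
  unfold half_sign. destruct (Rlt_dec (Derive (u (Half i)) 0) 0); nra.
Qed.

Lemma compact_Derive_eq e1 e2 x : edge_valid H P L e1 -> edge_valid H P L e2 ->
  is_compact e1 -> is_compact e2 -> 0 <= x <= ell -> Derive (u e1) x = Derive (u e2) x.
Proof.
  intros V1 V2 C1 C2 Hx.
  apply (Derive_ext_interval _ _ 0 ell); auto.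
  - apply (compact_solution e1 V1 C1 x Hx).
  - apply (compact_solution e2 V2 C2 x Hx).
Qed.

Lemma compact_slope_end e : edge_valid H P L e -> is_compact e -> Derive (u e) ell = 0.
Proof.
  intros He Hc. destruct u_bound_state as [_ [_ [_ [_ [Hpend [Hloop _]]]]]].
  destruct e as [i|i|j b]; simpl in He, Hc; [easy|now apply Hpend|].
  destruct (Hloop j He) as [_ Hmid].
  assert (Derive (u (LoopE j false)) ell = Derive (u (LoopE j true)) ell)
    by (apply compact_Derive_eq; simpl; auto; lra).
  destruct b; lra.
Qed.

Lemma kirchhoff_core :
  rsum H (fun i => Derive (u (Half i)) 0) + (INR P + 2 * INR L) * Derive (u core_edge) 0 = 0.
Proof.
  destruct u_bound_state as [_ [_ [_ [Hkir _]]]].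
  destruct core_edge_valid as [V0 C0].
  set (d := Derive (u core_edge) 0).
  rewrite (rsum_ext P _ (fun _ => d)), (rsum_ext L _ (fun _ => d + d)), !rsum_const in Hkir;
    [lra| |].
  - intros j Hj. unfold d.
    rewrite (compact_Derive_eq (LoopE j false) core_edge),
      (compact_Derive_eq (LoopE j true) core_edge); simpl; auto; lra.
  - intros i Hi. unfold d. rewrite (compact_Derive_eq _ core_edge); simpl; auto; lra.
Qed.

Lemma compact_slope_knot e : edge_valid H P L e -> is_compact e ->
  Derive (u e) 0 = theta * knot_slope.
Proof.
  intros He Hc. destruct core_edge_valid as [V0 C0].
  rewrite (compact_Derive_eq e core_edge) by (auto; lra).
  pose proof kirchhoff_core as Hkir.
  rewrite (rsum_ext H _ (fun i => if half_sign i then - knot_slope else knot_slope)),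
    rsum_sign in Hkir by (exact half_slope).
  assert (HPL : 1 <= INR P + 2 * INR L).
  { pose proof (le_INR 1 (P + L) core_nonempty) as HPL. rewrite plus_INR in HPL.
    pose proof (pos_INR L). simpl in HPL. lra. }
  unfold theta. rewrite minus_INR, plus_INR, mult_INR
    by (rewrite <- (length_seq H 0) at 2; apply filter_length_le).
  simpl INR. field_simplify_eq; lra.
Qed.

Lemma knot_value_phi : exists y, 0 <= y /\ phi p y = knot_value.
Proof.
  apply phi_surj; [easy|].
  pose proof (half_solution 0 ltac:(lia) 0 (Rle_refl 0)) as [_ Hz]. split; [easy|].
  apply le_peak_of_fF_nonneg; [easy|easy|apply fF_knot_nonneg].
Qed.

Section Knot_shift.

Variable y : R.
Hypothesis y_nonneg : 0 <= y.
Hypothesis phi_y : phi p y = knot_value.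

Lemma knot_slope_phi : knot_slope = tanh ((p - 2) / 2 * y) * phi p y.
Proof. unfold knot_slope. rewrite <- phi_y. now apply sqrt_2fF_phi. Qed.

Lemma half_profile i : (i < H)%nat ->
  if half_sign i then (forall x, 0 <= x -> u (Half i) x = phi p (x + y))
  else (forall x, 0 <= x -> u (Half i) x = phi p (x - y)).
Proof.
  intros Hi. pose proof (half_slope i Hi) as Hslope. rewrite knot_slope_phi in Hslope.
  assert (Hsol : forall x t, 0 <= t <= x ->
    solves_ode p (u (Half i)) t /\ 0 < u (Half i) t)
    by (intros x t Ht; apply half_solution; [easy|lra]).
  assert (HE : 0 <= energy p (u (Half i)) 0) by (rewrite half_energy; auto; lra).
  assert (H0 : u (Half i) 0 = phi p y) by (now rewrite value_at_knot, phi_y).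
  destruct (half_sign i); intros x Hx.
  - apply (eq_phi_shift p p_gt_2 _ x y (Hsol x) HE H0); [|lra]. rewrite Hslope. ring.
  - apply (eq_phi_shift p p_gt_2 _ x (- y) (Hsol x) HE); [now rewrite phi_opp| |lra].
    rewrite Hslope, phi_opp, <- Ropp_mult_distr_r, tanh_opp. ring.
Qed.

Lemma knot_shift_pos : 0 < y.
Proof.
  destruct (Rle_lt_or_eq_dec 0 y y_nonneg) as [|Hy0]; [easy|exfalso].
  destruct core_edge_valid as [V0 C0].
  assert (Hslope0 : knot_slope = 0).
  { rewrite knot_slope_phi, <- Hy0, Rmult_0_r. unfold tanh. rewrite sinh_0. lra. }
  assert (Hprofile : forall x, 0 <= x <= ell -> u core_edge x = phi p (x + y)).
  { apply (eq_phi_shift p p_gt_2); [now apply compact_solution| | |].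
    - unfold energy. rewrite compact_slope_knot, Hslope0, value_at_knot by easy.
      pose proof fF_knot_nonneg. lra.
    - now rewrite value_at_knot.
    - rewrite compact_slope_knot, Hslope0, Rmult_0_r, <- Hy0, Rmult_0_r by easy.
      unfold tanh. rewrite sinh_0. lra. }
  assert (Hend : Derive (u core_edge) ell = Derive (fun t => phi p (t + y)) ell).
  { apply (Derive_ext_interval _ _ 0 ell); [easy|lra| | |exact Hprofile].
    - apply (compact_solution core_edge V0 C0 ell). lra.
    - exists (- tanh ((p - 2) / 2 * (ell + y)) * phi p (ell + y)).
      apply is_derive_shift, is_derive_phi, p_gt_2. }
  rewrite compact_slope_end, Derive_shift, <- Hy0, Rplus_0_r in Hend by easy.
  rewrite (is_derive_unique _ _ _ (is_derive_phi p p_gt_2 ell)) in Hend.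
  assert (0 < tanh ((p - 2) / 2 * ell)) by (apply tanh_pos, Rmult_lt_0_compat; lra).
  pose proof (phi_pos p ell). nra.
Qed.

End Knot_shift.

Lemma compact_energy e x : edge_valid H P L e -> is_compact e -> 0 <= x <= ell ->
  energy p (u e) x = (1 - theta ^ 2) * fF p knot_value.
Proof.
  intros He Hc Hx.
  rewrite (energy_const p p_gt_2 (u e) 0 ell (compact_solution e He Hc) x Hx).
  unfold energy. rewrite compact_slope_knot, value_at_knot by easy.
  unfold knot_slope. rewrite Rpow_mult_distr, pow2_sqrt by (pose proof fF_knot_nonneg; lra).
  field.
Qed.

End Bound_state.

Theorem lemma2p1 (p ell : R) (H P L : nat) (u : edge -> R -> R) :
  2 < p -> 0 < ell -> (1 <= H)%nat -> (1 <= P + L)%nat ->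
  is_bound_state p ell H P L u -> is_positive ell H P L u -> core_symmetric ell H P L u ->
  exists y, 0 < y /\
  exists s : nat -> bool,
    (forall i, (i < H)%nat ->
       if s i then (forall x, 0 <= x -> u (Half i) x = phi p (x + y))
       else (forall x, 0 <= x -> u (Half i) x = phi p (x - y))) /\
    let Hp := length (filter s (seq 0 H)) in
    let Hm := (H - Hp)%nat in
    let theta := (INR Hp - INR Hm) / INR (P + 2 * L) in
    let z := phi p y in
    (0 < z < Rpower (p / 2) (1 / (p - 2))) /\
    (forall e, edge_valid H P L e -> is_compact e ->
       (forall x, 0 <= x <= ell -> solves_ode p (u e) x) /\
       u e 0 = z /\
       Derive (u e) 0 = theta * sqrt (2 * fF p z) /\
       Derive (u e) ell = 0 /\
       (forall x, 0 <= x <= ell ->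
          - (1 / 2) * (Derive (u e) x) ^ 2 + fF p (u e x) = (1 - theta ^ 2) * fF p z)).
Proof.
  intros Hp Hell HH HPL Hbs Hpos Hcs.
  destruct (knot_value_phi p ell H P L u) as [y [Hy0 Hy]]; auto.
  assert (Hy_pos : 0 < y) by now apply (knot_shift_pos p ell H P L u).
  exists y. split; [easy|].
  exists (half_sign u). split; [now apply (half_profile p ell H P L u)|].
  cbv zeta. split.
  - split; [apply phi_pos|apply (phi_lt_peak p Hp); lra].
  - rewrite Hy. intros e He Hc. split; [|split; [|split; [|split]]].
    + intros x Hx. now apply (compact_solution p ell H P L u).
    + now apply (value_at_knot p ell H P L u).
    + now apply (compact_slope_knot p ell H P L u).
    + now apply (compact_slope_end p ell H P L u).
    + intros x Hx. now apply (compact_energy p ell H P L u).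
Qed.
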